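(* Let $\tilde\beta$ be a minimizer over $b\in\mathbb R^q$ of $G(b;\lambda_2)=\frac1{2n}\|y-Xb\|^2+\frac12\lambda_2b'Lb$, where $\lambda_2\ge0$, and let $\tilde r=y-X\tilde\beta$. Then (i) $\lambda_2\max_{1\le j\le q}|d_j\tilde\beta_j-a_j'\tilde\beta|\le\|\tilde r\|\le\|y\|$ (equivalently, when all $d_j>0$, $\lambda_2\max_j d_j|\tilde\beta_j-a_j'\tilde\beta/d_j|\le\|\tilde r\|\le\|y\|$); (ii) for all $1\le j,k\le q$, $\lambda_2\,|d_j\tilde\beta_j-a_j'\tilde\beta-(d_k\tilde\beta_k-a_k'\tilde\beta)|\le\frac1n\|x_j-x_k\|\,\|y\|$.
   Context: $y\in\mathbb R^n$, $X=(x_1,\dots,x_q)\in\mathbb R^{n\times q}$ with $\|x_j\|^2=n$ for all $j$. $A=(a_{jk})$ is a symmetric $q\times q$ real matrix with zero diagonal, $a_j$ denotes its $j$th row (as a column vector), $d_j=\sum_k|a_{jk}|$, $L=\operatorname{diag}(d_1,\dots,d_q)-A$, so that $b'Lb=\sum_{j<k}|a_{jk}|(b_j-\operatorname{sgn}(a_{jk})b_k)^2$ and $(Lb)_j=d_jb_j-a_j'b$. *)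

From HB Require Import structures.
From mathcomp Require Import all_boot all_order all_algebra.
Set Implicit Arguments. Unset Strict Implicit. Unset Printing Implicit Defensive.
Import Order.TTheory GRing.Theory Num.Theory.
Local Open Scope ring_scope.

Definition norm2 {R : rcfType} {n : nat} (v : 'cV[R]_n) : R :=
  Num.sqrt (\sum_(i < n) v i 0 ^+ 2).

Definition dgr {R : rcfType} {q : nat} (A : 'M[R]_q) (j : 'I_q) : R :=
  \sum_(k < q) `|A j k|.

Definition Lap {R : rcfType} {q : nat} (A : 'M[R]_q) : 'M[R]_q :=
  diag_mx (\row_j dgr A j) - A.

Definition Gobj {R : rcfType} {n q : nat} (y : 'cV[R]_n) (X : 'M[R]_(n, q))
  (A : 'M[R]_q) (lam : R) (b : 'cV[R]_q) : R :=
  (2 * n%:R)^-1 * norm2 (y - X *m b) ^+ 2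
  + 2^-1 * lam * (b^T *m Lap A *m b) 0 0.

From HB Require Import structures.
From mathcomp Require Import all_boot all_order all_algebra.
From mathcomp Require Import ring lra.
Import Order.TTheory GRing.Theory Num.Theory.
Local Open Scope ring_scope.

(* The proof is the first-order optimality condition plus Cauchy-Schwarz.
   - We first develop the Euclidean inner product [dot] on column vectors, with
     Cauchy-Schwarz obtained from Lagrange's identity by symmetrizing a double
     sum ([sum_sym_ge0]).
   - The same symmetrization shows that the Laplacian L = diag(d) - A of a
     symmetric A is positive semidefinite.
   - Expanding G along a line b + t e gives a quadratic in t; since the linear
     coefficient of a nonnegative quadratic vanishing at 0 is zero, a
     minimizer beta satisfies lam e'L beta = 1/n (Xe)'r for every direction e.
   - Hence lam |e'L beta| <= 1/n |Xe| |r|; comparing G(beta) with G(0) gives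
     |r| <= |y|.  Taking e the j-th unit vector (where |x_j| = sqrt n) gives
     part (i), and e = e_j - e_k gives part (ii). *)

Section InnerProduct.
Context {R : rcfType}.

Definition dot {m} (u v : 'cV[R]_m) : R := \sum_i u i 0 * v i 0.

Lemma dotC {m} (u v : 'cV[R]_m) : dot u v = dot v u.
Proof. by apply: eq_bigr => i _; rewrite mulrC. Qed.

Lemma dotDl {m} (u v w : 'cV[R]_m) : dot (u + v) w = dot u w + dot v w.
Proof. by rewrite /dot -big_split; apply: eq_bigr => i _; rewrite mxE mulrDl. Qed.

Lemma dotNl {m} (u w : 'cV[R]_m) : dot (- u) w = - dot u w.
Proof. by rewrite /dot -sumrN; apply: eq_bigr => i _; rewrite mxE mulNr. Qed.

Lemma dotZl {m} a (u w : 'cV[R]_m) : dot (a *: u) w = a * dot u w.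
Proof. by rewrite /dot mulr_sumr; apply: eq_bigr => i _; rewrite mxE mulrA. Qed.

Lemma dotDr {m} (u v w : 'cV[R]_m) : dot w (u + v) = dot w u + dot w v.
Proof. by rewrite !(dotC w) dotDl. Qed.

Lemma dotNr {m} (u w : 'cV[R]_m) : dot w (- u) = - dot w u.
Proof. by rewrite !(dotC w) dotNl. Qed.

Lemma dotZr {m} a (u w : 'cV[R]_m) : dot w (a *: u) = a * dot w u.
Proof. by rewrite !(dotC w) dotZl. Qed.

Lemma dot0l {m} (v : 'cV[R]_m) : dot 0 v = 0.
Proof. by rewrite -(scale0r 0) dotZl mul0r. Qed.

Lemma mxdot {m} (u v : 'cV[R]_m) : (u^T *m v) 0 0 = dot u v.
Proof. by rewrite mxE; apply: eq_bigr => i _; rewrite mxE. Qed.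

Lemma dot_mul {m p} (M : 'M[R]_(m, p)) u v : dot u (M *m v) = dot (M^T *m u) v.
Proof. by rewrite -!mxdot mulmxA trmx_mul trmxK. Qed.

Lemma dot_delta {m} (j : 'I_m) (v : 'cV[R]_m) : dot (delta_mx j 0) v = v j 0.
Proof.
rewrite /dot (bigD1 j) //= big1 => [|i /negbTE nij]; rewrite mxE ?eqxx ?nij /=.
  by rewrite mul1r addr0.
by rewrite mul0r.
Qed.

Lemma dot_dim0 {m} (u v : 'cV[R]_m) : m = 0%N -> dot u v = 0.
Proof. by move=> m0; move: u v; rewrite m0 => u v; rewrite /dot big_ord0. Qed.

Lemma dot_ge0 {m} (u : 'cV[R]_m) : 0 <= dot u u.
Proof. by apply: sumr_ge0 => i _; rewrite -expr2 sqr_ge0. Qed.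

Lemma norm2_dot {m} (u : 'cV[R]_m) : norm2 u = Num.sqrt (dot u u).
Proof. by rewrite /norm2; congr Num.sqrt; apply: eq_bigr => i _; rewrite expr2. Qed.

Lemma norm2_ge0 {m} (u : 'cV[R]_m) : 0 <= norm2 u.
Proof. exact: sqrtr_ge0. Qed.

Lemma norm2_sq {m} (u : 'cV[R]_m) : norm2 u ^+ 2 = dot u u.
Proof. by rewrite norm2_dot sqr_sqrtr // dot_ge0. Qed.

(* A double sum is nonnegative as soon as each symmetrized term
   f j k + f k j is: twice the sum is the sum of the symmetrized terms. *)
Lemma sum_sym_ge0 {m} (f : 'I_m -> 'I_m -> R) :
  (forall j k, 0 <= f j k + f k j) -> 0 <= \sum_j \sum_k f j k.
Proof.
move=> fsym_ge0.
have twice : 2 * \sum_j \sum_k f j k = \sum_j \sum_k (f j k + f k j).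
  rewrite mulr2n mulrDl mul1r [X in _ + X = _]exchange_big -big_split /=.
  by apply: eq_bigr => j _; rewrite -big_split.
have : 0 <= 2 * \sum_j \sum_k f j k.
  by rewrite twice; apply: sumr_ge0 => j _; apply: sumr_ge0.
by rewrite pmulr_rge0.
Qed.

(* Cauchy-Schwarz, squared form: Lagrange's identity
   |u|^2 |v|^2 - (u'v)^2 = 1/2 sum_{j,k} (u_j v_k - u_k v_j)^2. *)
Lemma CauchySchwarz2 {m} (u v : 'cV[R]_m) : dot u v ^+ 2 <= dot u u * dot v v.
Proof.
rewrite -subr_ge0 expr2 /dot !mulr_suml -sumrB.
under eq_bigr => j _ do rewrite !mulr_sumr -sumrB.
apply: sum_sym_ge0 => j k.
have -> : u j 0 * u j 0 * (v k 0 * v k 0) - u j 0 * v j 0 * (u k 0 * v k 0)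
        + (u k 0 * u k 0 * (v j 0 * v j 0) - u k 0 * v k 0 * (u j 0 * v j 0))
        = (u j 0 * v k 0 - u k 0 * v j 0) ^+ 2 by ring.
exact: sqr_ge0.
Qed.

Lemma CauchySchwarz {m} (u v : 'cV[R]_m) : `|dot u v| <= norm2 u * norm2 v.
Proof.
rewrite !norm2_dot -sqrtrM ?dot_ge0 // -sqrtr_sqr ler_sqrt.
  exact: CauchySchwarz2.
by rewrite mulr_ge0 ?dot_ge0.
Qed.

End InnerProduct.

Section Laplacian.
Variables (R : rcfType) (q : nat) (A : 'M[R]_q).

Lemma Lap_mul (b : 'cV[R]_q) j :
  (Lap A *m b) j 0 = dgr A j * b j 0 - \sum_(k < q) A j k * b k 0.
Proof. by rewrite /Lap mulmxBl mxE mul_diag_mx !mxE. Qed.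

Hypothesis symA : A^T = A.

Lemma Lap_tr : (Lap A)^T = Lap A.
Proof. by rewrite /Lap linearB /= tr_diag_mx symA. Qed.

(* Each pair term of b'Lb = sum_{j,k} |a_jk| b_j^2 - a_jk b_j b_k is controlled by
   2 a x z <= 2 |a||x||z| <= |a| (x^2 + z^2). *)
Lemma abs_cross_le (a x z : R) : 2 * (a * x * z) <= `|a| * (x ^+ 2 + z ^+ 2).
Proof.
have le_abs : a * x * z <= `|a| * `|x| * `|z| by rewrite -!normrM ler_norm.
rewrite -[x ^+ 2]real_normK ?num_real // -[z ^+ 2]real_normK ?num_real //.
apply: (le_trans (y := 2 * (`|a| * `|x| * `|z|))); first by rewrite ler_pM2l.
have -> : `|a| * (`|x| ^+ 2 + `|z| ^+ 2)
          = 2 * (`|a| * `|x| * `|z|) + `|a| * (`|x| - `|z|) ^+ 2 by ring.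
by rewrite lerDl mulr_ge0 ?sqr_ge0.
Qed.

Lemma Lap_psd (b : 'cV[R]_q) : 0 <= dot b (Lap A *m b).
Proof.
have symAjk j k : A k j = A j k by rewrite -[in RHS]symA mxE.
pose f j k := `|A j k| * b j 0 ^+ 2 - A j k * b j 0 * b k 0.
have -> : dot b (Lap A *m b) = \sum_j \sum_k f j k.
  apply: eq_bigr => j _.
  rewrite Lap_mul /dgr mulr_suml mulrBr !mulr_sumr -sumrB.
  by apply: eq_bigr => k _; rewrite /f; ring.
apply: sum_sym_ge0 => j k.
have -> : f j k + f k j
        = `|A j k| * (b j 0 ^+ 2 + b k 0 ^+ 2) - 2 * (A j k * b j 0 * b k 0).
  by rewrite /f symAjk; ring.
by rewrite subr_ge0 abs_cross_le.
Qed.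

End Laplacian.

(* A quadratic t c1 + t^2 c2 that is nonnegative for every t (i.e. minimal at
   t = 0) has zero linear coefficient: evaluating at t = -c1/k with k > c2
   gives 0 <= c1^2 (c2 - k) / k^2. *)
Lemma quad_min0 (R : realFieldType) (c1 c2 : R) :
  (forall t, 0 <= t * c1 + t ^+ 2 * c2) -> c1 = 0.
Proof.
move=> quad_ge0.
pose k := `|c2| + 1.
have k_gt0 : 0 < k by rewrite ltr_pwDr ?normr_ge0.
have : 0 <= c1 ^+ 2 * (c2 - k).
  have -> : c1 ^+ 2 * (c2 - k)
          = (- c1 / k * c1 + (- c1 / k) ^+ 2 * c2) * k ^+ 2.
    by field; rewrite gt_eqF.
  by rewrite mulr_ge0 ?sqr_ge0.
have c2_lt_k : c2 - k < 0 by rewrite subr_lt0 /k ltr_pwDr ?ler_norm.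
rewrite nmulr_lge0 // => c1sq_le0.
by apply/eqP; rewrite -sqrf_eq0 eq_le c1sq_le0 sqr_ge0.
Qed.

Section Objective.
Context {R : rcfType} {n q : nat} {y : 'cV[R]_n} {X : 'M[R]_(n, q)}.
Context {A : 'M[R]_q} {lam : R}.
Hypothesis symA : A^T = A.

Local Notation G := (Gobj y X A lam).

Lemma Gobj_dot b :
  G b = (2 * n%:R)^-1 * dot (y - X *m b) (y - X *m b)
        + 2^-1 * lam * dot b (Lap A *m b).
Proof. by rewrite /Gobj norm2_sq -mulmxA mxdot. Qed.

Lemma Gobj_line b e t :
  G (b + t *: e) = G b
    + t * (lam * dot e (Lap A *m b) - n%:R^-1 * dot (X *m e) (y - X *m b))
    + t ^+ 2 * ((2 * n%:R)^-1 * dot (X *m e) (X *m e)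
                + 2^-1 * lam * dot e (Lap A *m e)).
Proof.
have Lsym : dot b (Lap A *m e) = dot e (Lap A *m b).
  by rewrite dot_mul Lap_tr // dotC.
have residual_line : y - X *m (b + t *: e) = (y - X *m b) - t *: (X *m e).
  by rewrite mulmxDr -scalemxAr opprD addrA.
rewrite !Gobj_dot residual_line mulmxDr -scalemxAr.
set w := X *m e.
rewrite !(dotDl, dotDr, dotNl, dotNr, dotZl, dotZr) Lsym.
rewrite (dotC y w) (dotC (X *m b) w) invfM.
by move: n%:R^-1 => ninv; field.
Qed.

Context {beta : 'cV[R]_q}.
Hypothesis beta_min : forall b, G beta <= G b.

Lemma minimizer_stationary e :
  lam * dot e (Lap A *m beta) = n%:R^-1 * dot (X *m e) (y - X *m beta).
Proof.
apply/eqP; rewrite -subr_eq0; apply/eqP.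
eapply quad_min0 => t.
by have := beta_min (beta + t *: e); rewrite Gobj_line -addrA lerDl; apply.
Qed.

Hypothesis lam_ge0 : 0 <= lam.

(* Comparing with b = 0, and using b'Lb >= 0: the fit never has a larger
   residual than the null model. *)
Lemma minimizer_residual_le : norm2 (y - X *m beta) <= norm2 y.
Proof.
have [n0|n_gt0] := posnP n.
  by rewrite !norm2_dot !dot_dim0.
have penalty_ge0 : 0 <= 2^-1 * lam * dot beta (Lap A *m beta).
  by rewrite !mulr_ge0 ?invr_ge0 ?ler0n ?Lap_psd.
have w_gt0 : 0 < (2 * n%:R)^-1 :> R by rewrite invr_gt0 mulr_gt0 ?ltr0n.
have := beta_min 0; rewrite !Gobj_dot mulmx0 subr0 dot0l mulr0 addr0 => Gle.
have : (2 * n%:R)^-1 * dot (y - X *m beta) (y - X *m beta)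
       <= (2 * n%:R)^-1 * dot y y.
  by apply: le_trans Gle; rewrite lerDl.
by rewrite ler_pM2l // => le_sq; rewrite !norm2_dot ler_sqrt ?dot_ge0.
Qed.

(* Stationarity and Cauchy-Schwarz bound lam |e'L beta| for every direction. *)
Lemma minimizer_pairing_bound e :
  lam * `|dot e (Lap A *m beta)|
  <= n%:R^-1 * norm2 (X *m e) * norm2 (y - X *m beta).
Proof.
have ninv_ge0 : 0 <= n%:R^-1 :> R by rewrite invr_ge0 ler0n.
rewrite -(ger0_norm lam_ge0) -normrM minimizer_stationary normrM ger0_norm //.
by rewrite -mulrA ler_wpM2l ?CauchySchwarz.
Qed.

End Objective.

(* A column of squared norm n has norm sqrt n, and sqrt n / n <= 1. *)
Lemma sqrt_div_le1 (R : realFieldType) (n : nat) (s : R) :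
  0 <= s -> s ^+ 2 = n%:R -> n%:R^-1 * s <= 1.
Proof.
move=> s_ge0 s_sq.
have [n0|n_gt0] := posnP n; first by rewrite n0 invr0 mul0r ler01.
have n_ge1 : 1 <= n%:R :> R by rewrite ler1n.
rewrite ler_pdivrMl ?ltr0n // mulr1 -s_sq.
nra.
Qed.

Theorem proposition1 (R : rcfType) (n q : nat)
  (y : 'cV[R]_n) (X : 'M[R]_(n, q)) (A : 'M[R]_q) (lam : R)
  (beta : 'cV[R]_q) :
  (forall j : 'I_q, norm2 (col j X) ^+ 2 = n%:R) ->
  A^T = A ->
  (forall j : 'I_q, A j j = 0) ->
  0 <= lam ->
  (forall b : 'cV[R]_q, Gobj y X A lam beta <= Gobj y X A lam b) ->
  let r := y - X *m beta in
  let Lb := fun j : 'I_q => dgr A j * beta j 0 - \sum_(k < q) A j k * beta k 0 in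
  ((forall j : 'I_q, lam * `|Lb j| <= norm2 r) /\ norm2 r <= norm2 y) /\
  (forall j k : 'I_q,
      lam * `|Lb j - Lb k| <= n%:R^-1 * norm2 (col j X - col k X) * norm2 y).
Proof.
move=> normX symA _ lam_ge0 beta_min r Lb.
have Lb_dot j : Lb j = dot (delta_mx j 0) (Lap A *m beta).
  by rewrite dot_delta Lap_mul.
have col_delta j : X *m delta_mx j 0 = col j X by rewrite colE.
have bound := minimizer_pairing_bound symA beta_min lam_ge0.
have residual_le : norm2 r <= norm2 y := minimizer_residual_le symA beta_min lam_ge0.
split; first split=> // j.
- rewrite Lb_dot; apply: le_trans (bound _) _; rewrite col_delta.
  by rewrite -[leRHS]mul1r ler_wpM2r ?norm2_ge0 ?sqrt_div_le1 ?norm2_ge0.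
- move=> j k.
  have -> : Lb j - Lb k = dot (delta_mx j 0 - delta_mx k 0) (Lap A *m beta).
    by rewrite dotDl dotNl !Lb_dot.
  apply: le_trans (bound _) _; rewrite mulmxBr !col_delta.
  by rewrite ler_wpM2l ?mulr_ge0 ?invr_ge0 ?ler0n ?norm2_ge0.
Qed.
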